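(* Let $(V,\|\cdot\|)$ be a normed plane with unit circle $S$. The norm is derived from an inner product if and only if for every $x\in S$ and every $y\in S$ with $y\dashv_B x$ (i.e. $y$ is a point of $S$ at which the direction $x$ supports the unit ball), the segment $[(-y)y]$ is contained in $\mathrm{bis}(-x,x)$.
   Context: A normed (Minkowski) plane $(V,\|\cdot\|)$ is a two-dimensional real vector space with a norm; $B$ is its unit ball and $S=\{v:\|v\|=1\}$ its unit circle. For distinct $x,y$, $\mathrm{bis}(x,y)=\{z\in V:\|z-x\|=\|z-y\|\}$. For nonzero $x,y\in V$, $x$ is Birkhoff orthogonal to $y$, written $x\dashv_B y$, if $\|x+ty\|\ge\|x\|$ for all $t\in\mathbb{R}$. *)

From Stdlib Require Import Reals.
Open Scope R_scope.

(* The plane: every 2-dimensional real vector space is linearly isomorphic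
   to R^2, so we take V = R * R with its standard vector operations. *)
Definition V : Type := (R * R)%type.
Definition vadd (u v : V) : V := (fst u + fst v, snd u + snd v).
Definition vscal (t : R) (v : V) : V := (t * fst v, t * snd v).
Definition vopp (v : V) : V := vscal (-1) v.
Definition vzero : V := (0, 0).

Record is_norm (N : V -> R) : Prop := {
  norm_nonneg : forall v, 0 <= N v;
  norm_zero : forall v, N v = 0 <-> v = vzero;
  norm_hom : forall (t : R) v, N (vscal t v) = Rabs t * N v;
  norm_triangle : forall u v, N (vadd u v) <= N u + N v
}.

Record is_inner_product (B : V -> V -> R) : Prop := {
  ip_sym : forall u v, B u v = B v u;
  ip_add_l : forall u v w, B (vadd u v) w = B u w + B v w;
  ip_scal_l : forall (t : R) u w, B (vscal t u) w = t * B u w;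
  ip_pos : forall v, v <> vzero -> 0 < B v v
}.

Definition norm_from_inner_product (N : V -> R) : Prop :=
  exists B, is_inner_product B /\ forall v, N v = sqrt (B v v).

Definition unit_circle (N : V -> R) (v : V) : Prop := N v = 1.

Definition birkhoff_orth (N : V -> R) (x y : V) : Prop :=
  forall t : R, N x <= N (vadd x (vscal t y)).

Definition bisector (N : V -> R) (x y z : V) : Prop :=
  N (vadd z (vopp x)) = N (vadd z (vopp y)).

Definition in_segment (a b z : V) : Prop :=
  exists s : R, 0 <= s <= 1 /\ z = vadd (vscal (1 - s) a) (vscal s b).

From Stdlib Require Import Reals Lra Psatz Classical.
Open Scope R_scope.

(* For an inner product norm, [y] Birkhoff orthogonal to [x] means [<x, y> = 0],
   and then [c y] is equidistant from [x] and [-x].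

   Conversely, the condition makes Birkhoff orthogonality symmetric on the unit
   circle and turns [a x + b y |-> a x - b y] into an isometry whenever [y] is
   Birkhoff orthogonal to the unit vector [x].  It also rules out segments on the
   unit circle: reflecting a flat piece of a supporting line extends it further
   and further, against the triangle inequality.  Two unit vectors [u], [v] are
   therefore exchanged by the reflection along the direction of [u + v], so
   [N (s u + t v) = N (t u + s v)].  In a Birkhoff orthogonal frame [e1], [e2]
   this forces every unit vector [a e1 + b e2] to satisfy [a^2 + b^2 = 1]. *)

Lemma V_ext (u v : V) : fst u = fst v -> snd u = snd v -> u = v.
Proof. destruct u, v; simpl; intros -> ->; reflexivity. Qed.

Ltac vec_eq := apply V_ext; unfold vadd, vscal, vopp, vzero; simpl; try ring.

Definition det (u v : V) : R := fst u * snd v - snd u * fst v.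

Lemma scal_eq_vzero t v : v <> vzero -> vscal t v = vzero -> t = 0.
Proof.
  intros Hv E; destruct v as [v1 v2]; unfold vscal, vzero in *; simpl in E.
  injection E as E1 E2.
  destruct (Req_dec t 0) as [| Ht]; [assumption |].
  exfalso; apply Hv; f_equal; nra.
Qed.

Lemma sumsq_neq0 v : v <> vzero -> fst v * fst v + snd v * snd v <> 0.
Proof.
  intros Hv E; apply Hv; destruct v as [v1 v2]; simpl in E.
  unfold vzero; f_equal; nra.
Qed.

Lemma det_neq0_vneq0 u v : det u v <> 0 -> v <> vzero.
Proof. intros D ->; apply D; unfold det, vzero; simpl; ring. Qed.

Lemma det_decomp x y v : det x y <> 0 ->
  v = vadd (vscal (det v y / det x y) x) (vscal (det x v / det x y) y).
Proof. unfold det; intros D; apply V_ext; unfold vadd, vscal; simpl; field; assumption. Qed.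

Lemma det_indep x y a b : det x y <> 0 ->
  vadd (vscal a x) (vscal b y) = vzero -> a = 0 /\ b = 0.
Proof.
  unfold det; intros D E; unfold vadd, vscal, vzero in E; simpl in E.
  injection E as E1 E2; split.
  - apply Rmult_eq_reg_r with (fst x * snd y - snd x * fst y); [| assumption].
    transitivity (snd y * (a * fst x + b * fst y) - fst y * (a * snd x + b * snd y));
      [ring | rewrite E1, E2; ring].
  - apply Rmult_eq_reg_r with (fst x * snd y - snd x * fst y); [| assumption].
    transitivity (fst x * (a * snd x + b * snd y) - snd x * (a * fst x + b * fst y));
      [ring | rewrite E1, E2; ring].
Qed.

Lemma Rabs_div_le_1 a b : a <> 0 -> Rabs b <= Rabs a -> -1 <= b / a <= 1.
Proof.
  intros Ha Hba.
  assert (E : Rabs (b / a) * Rabs a = Rabs b)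
    by (rewrite <- Rabs_mult; f_equal; field; assumption).
  assert (Ha' : 0 < Rabs a) by (apply Rabs_pos_lt; assumption).
  assert (Hq : Rabs (b / a) <= 1) by nra.
  revert Hq; unfold Rabs at 1; destruct (Rcase_abs (b / a)); lra.
Qed.

Definition convex (g : R -> R) : Prop :=
  forall a b l, 0 <= l <= 1 -> g (l * a + (1 - l) * b) <= l * g a + (1 - l) * g b.

Lemma convex_chord g u v w : convex g -> u < v < w ->
  (w - u) * g v <= (w - v) * g u + (v - u) * g w.
Proof.
  intros Hg Huvw.
  set (l := (w - v) / (w - u)).
  assert (Hl : 0 <= l <= 1).
  { unfold l; split.
    - apply Rlt_le, Rdiv_lt_0_compat; lra.
    - apply Rmult_le_reg_r with (w - u); [lra |].
      unfold Rdiv; rewrite Rmult_assoc, Rinv_l; lra. }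
  assert (E := Hg u w l Hl).
  replace (l * u + (1 - l) * w) with v in E by (unfold l; field; lra).
  apply Rmult_le_compat_l with (r := w - u) in E; [| lra].
  replace ((w - u) * (l * g u + (1 - l) * g w)) with ((w - v) * g u + (v - u) * g w) in E
    by (unfold l; field; lra).
  exact E.
Qed.

Lemma convex_le_ends g a b s M : convex g -> a <= s <= b ->
  g a <= M -> g b <= M -> g s <= M.
Proof.
  intros Hg Hs Ha Hb.
  destruct (Req_dec s a) as [-> |]; [assumption |].
  destruct (Req_dec s b) as [-> |]; [assumption |].
  assert (E := convex_chord g a s b Hg ltac:(lra)).
  apply Rmult_le_reg_l with (b - a); nra.
Qed.

Lemma convex_ge_three g u v w : convex g -> u < v < w ->
  g u = g v -> g w = g v -> forall s, g v <= g s.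
Proof.
  intros Hg Huvw Hu Hw s.
  destruct (Rlt_le_dec s u) as [Hs | Hs].
  { assert (E := convex_chord g s u v Hg ltac:(lra)); nra. }
  destruct (Rlt_le_dec s v) as [Hs' | Hs'].
  { destruct (Req_dec s u) as [-> |]; [lra |].
    assert (E := convex_chord g u s w Hg ltac:(lra)).
    assert (E' := convex_chord g s v w Hg ltac:(lra)); nra. }
  destruct (Req_dec s v) as [-> |]; [lra |].
  assert (E := convex_chord g u v s Hg ltac:(lra)); nra.
Qed.

Lemma convex_sym_min g : convex g -> (forall c, -1 <= c <= 1 -> g (- c) = g c) ->
  forall t, g 0 <= g t.
Proof.
  intros Hg Hsym.
  assert (Hpos : forall c, 0 < c <= 1 -> g 0 <= g c).
  { intros c Hc.
    assert (E := convex_chord g (- c) 0 c Hg ltac:(lra)).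
    rewrite Hsym in E by lra; nra. }
  assert (Hneg : forall c, -1 <= c < 0 -> g 0 <= g c).
  { intros c Hc; rewrite <- (Hsym c) by lra; apply Hpos; lra. }
  intros t.
  destruct (Rlt_le_dec 1 t) as [Ht | Ht].
  { assert (E := convex_chord g 0 1 t Hg ltac:(lra)).
    assert (H1 := Hpos 1 ltac:(lra)); nra. }
  destruct (Rlt_le_dec t (-1)) as [Ht' | Ht'].
  { assert (E := convex_chord g t (-1) 0 Hg ltac:(lra)).
    assert (H1 := Hneg (-1) ltac:(lra)); nra. }
  destruct (Rtotal_order t 0) as [| [-> |]].
  - apply Hneg; lra.
  - lra.
  - apply Hpos; lra.
Qed.

Section Norm.

Variable N : V -> R.
Hypothesis HN : is_norm N.

Lemma norm_ge0 v : 0 <= N v.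
Proof. exact (norm_nonneg N HN v). Qed.

Lemma norm_scal t v : N (vscal t v) = Rabs t * N v.
Proof. exact (norm_hom N HN t v). Qed.

Lemma norm_vzero : N vzero = 0.
Proof. apply (norm_zero N HN); reflexivity. Qed.

Lemma norm_gt0 v : v <> vzero -> 0 < N v.
Proof.
  intros Hv; destruct (norm_ge0 v) as [| E]; [assumption |].
  exfalso; apply Hv, (norm_zero N HN); auto.
Qed.

Lemma norm_eq1_neq0 v : N v = 1 -> v <> vzero.
Proof. intros Hv ->; rewrite norm_vzero in Hv; lra. Qed.

Lemma norm_opp v : N (vopp v) = N v.
Proof. unfold vopp; rewrite norm_scal, Rabs_left by lra; ring. Qed.

Lemma norm_opp_eq u v : vopp u = v -> N u = N v.
Proof. intros <-; symmetry; apply norm_opp. Qed.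

Lemma norm_sub_le u v : N u - N v <= N (vadd u v).
Proof.
  assert (H := norm_triangle N HN (vadd u v) (vopp v)).
  replace (vadd (vadd u v) (vopp v)) with u in H by vec_eq.
  rewrite norm_opp in H; lra.
Qed.

Lemma norm_normalize v : v <> vzero -> N (vscal (/ N v) v) = 1.
Proof.
  intros Hv; assert (Hn := norm_gt0 v Hv).
  rewrite norm_scal, Rabs_pos_eq by (left; apply Rinv_0_lt_compat; lra).
  field; lra.
Qed.

Lemma convex_norm_line p d : convex (fun s => N (vadd p (vscal s d))).
Proof.
  intros a b l Hl; simpl.
  replace (vadd p (vscal (l * a + (1 - l) * b) d)) with
    (vadd (vscal l (vadd p (vscal a d))) (vscal (1 - l) (vadd p (vscal b d)))) by vec_eq.
  eapply Rle_trans; [apply (norm_triangle N HN) |].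
  rewrite !norm_scal, !Rabs_pos_eq by lra; lra.
Qed.

Lemma norm_line_lipschitz p d t s :
  Rabs (N (vadd p (vscal t d)) - N (vadd p (vscal s d))) <= Rabs (t - s) * N d.
Proof.
  assert (H1 := norm_triangle N HN (vadd p (vscal s d)) (vscal (t - s) d)).
  assert (H2 := norm_triangle N HN (vadd p (vscal t d)) (vscal (s - t) d)).
  replace (vadd (vadd p (vscal s d)) (vscal (t - s) d)) with (vadd p (vscal t d)) in H1
    by vec_eq.
  replace (vadd (vadd p (vscal t d)) (vscal (s - t) d)) with (vadd p (vscal s d)) in H2
    by vec_eq.
  rewrite norm_scal in H1, H2; rewrite Rabs_minus_sym in H2.
  apply Rabs_le; lra.
Qed.

Lemma norm_line_continuous p d c : continuity_pt (fun t => N (vadd p (vscal t d))) c.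
Proof.
  intros eps Heps.
  assert (Hd := norm_ge0 d).
  exists (eps / (N d + 1)); split.
  - apply Rdiv_lt_0_compat; lra.
  - intros t [_ Ht]; simpl in *; unfold R_dist in *.
    eapply Rle_lt_trans; [apply norm_line_lipschitz |].
    apply Rle_lt_trans with (eps / (N d + 1) * N d); [apply Rmult_le_compat_r; lra |].
    apply Rlt_le_trans with (eps / (N d + 1) * (N d + 1)).
    + apply Rmult_lt_compat_l; [apply Rdiv_lt_0_compat |]; lra.
    + right; field; lra.
Qed.

(* Outside [-T, T] the line is farther than [p] itself, so a minimum on the
   compact interval is global. *)
Lemma norm_line_has_min p d :
  exists t0, forall t, N (vadd p (vscal t0 d)) <= N (vadd p (vscal t d)).
Proof.
  destruct (classic (d = vzero)) as [-> | Hd].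
  { exists 0; intros t; right; f_equal; vec_eq. }
  assert (Hnd := norm_gt0 d Hd).
  set (g := fun t => N (vadd p (vscal t d))).
  set (T := 2 * N p / N d).
  assert (HT : 0 <= T)
    by (apply Rmult_le_pos; [assert (h := norm_ge0 p); lra |
                             left; apply Rinv_0_lt_compat; assumption]).
  destruct (continuity_ab_min g (- T) T ltac:(lra)
              (fun c _ => norm_line_continuous p d c)) as [t0 [Hmin _]].
  exists t0; intros t; fold (g t0) (g t).
  destruct (Rle_dec (Rabs t) T) as [Ht | Ht].
  { apply Hmin; revert Ht; unfold Rabs; destruct (Rcase_abs t); lra. }
  apply Rle_trans with (g 0); [apply Hmin; lra |].
  assert (E := norm_sub_le (vscal t d) p).
  replace (vadd (vscal t d) p) with (vadd p (vscal t d)) in E by vec_eq.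
  rewrite norm_scal in E.
  assert (ET : T * N d = 2 * N p) by (unfold T; field; lra).
  unfold g; replace (vadd p (vscal 0 d)) with p by vec_eq.
  nra.
Qed.

Lemma birkhoff_orth_scal c y x : birkhoff_orth N y x -> birkhoff_orth N (vscal c y) x.
Proof.
  intros Hb t.
  destruct (Req_dec c 0) as [-> | Hc].
  { replace (vscal 0 y) with vzero by vec_eq; rewrite norm_vzero; apply norm_ge0. }
  replace (vadd (vscal c y) (vscal t x)) with (vscal c (vadd y (vscal (t / c) x)))
    by (vec_eq; field; assumption).
  rewrite !norm_scal; apply Rmult_le_compat_l; [apply Rabs_pos | apply Hb].
Qed.

Lemma birkhoff_orth_det x y : x <> vzero -> y <> vzero ->
  birkhoff_orth N y x -> det x y <> 0.
Proof.
  intros Hx Hy Hb D.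
  assert (S := sumsq_neq0 x Hx).
  set (t := (fst x * fst y + snd x * snd y) / (fst x * fst x + snd x * snd x)).
  assert (E : vadd y (vscal (- t) x) = vzero).
  { unfold det in D; apply V_ext; unfold vadd, vscal, vzero, t; simpl.
    - apply Rmult_eq_reg_r with (fst x * fst x + snd x * snd x); [| assumption].
      transitivity (- snd x * (fst x * snd y - snd x * fst y)); [field; assumption |].
      rewrite D; ring.
    - apply Rmult_eq_reg_r with (fst x * fst x + snd x * snd x); [| assumption].
      transitivity (fst x * (fst x * snd y - snd x * fst y)); [field; assumption |].
      rewrite D; ring. }
  specialize (Hb (- t)); rewrite E, norm_vzero in Hb.
  assert (H := norm_gt0 y Hy); lra.
Qed.

Lemma birkhoff_orth_exists x : x <> vzero -> exists y, N y = 1 /\ birkhoff_orth N y x.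
Proof.
  intros Hx.
  set (w := (- snd x, fst x) : V).
  destruct (norm_line_has_min w x) as [t0 Ht0].
  set (y := vadd w (vscal t0 x)).
  assert (Hy : y <> vzero).
  { apply (det_neq0_vneq0 x).
    replace (det x y) with (fst x * fst x + snd x * snd x) by (unfold det, y, w; simpl; ring).
    apply sumsq_neq0; assumption. }
  exists (vscal (/ N y) y); split; [apply norm_normalize; assumption |].
  apply birkhoff_orth_scal; intros t; unfold y.
  replace (vadd (vadd w (vscal t0 x)) (vscal t x)) with (vadd w (vscal (t0 + t) x)) by vec_eq.
  apply Ht0.
Qed.

End Norm.

Lemma norm_from_inner_product_of_frame (N : V -> R) e1 e2 : det e1 e2 <> 0 ->
  (forall a b, N (vadd (vscal a e1) (vscal b e2)) = sqrt (a * a + b * b)) ->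
  norm_from_inner_product N.
Proof.
  intros D Hf.
  set (c1 := fun v => det v e2 / det e1 e2).
  set (c2 := fun v => det e1 v / det e1 e2).
  exists (fun u v => c1 u * c1 v + c2 u * c2 v); split; [split |].
  - intros; ring.
  - intros; unfold c1, c2, det in *; simpl; field; assumption.
  - intros; unfold c1, c2, det in *; simpl; field; assumption.
  - intros v Hv.
    assert (Hc : c1 v <> 0 \/ c2 v <> 0).
    { apply not_and_or; intros [Z1 Z2]; apply Hv.
      rewrite (det_decomp e1 e2 v D); fold (c1 v) (c2 v); rewrite Z1, Z2; vec_eq. }
    destruct Hc as [Hc | Hc]; assert (P := Rsqr_pos_lt _ Hc); unfold Rsqr in P; nra.
  - intros v; rewrite (det_decomp e1 e2 v D) at 1; apply Hf.
Qed.

(* The segment [(-y) y] consists of the points [c y] with [-1 <= c <= 1]. *)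
Definition bisector_condition (N : V -> R) : Prop :=
  forall x y, N x = 1 -> N y = 1 -> birkhoff_orth N y x ->
  forall c, -1 <= c <= 1 -> N (vadd (vscal c y) x) = N (vadd (vscal c y) (vopp x)).

Section BisectorCondition.

Variable N : V -> R.
Hypothesis HN : is_norm N.
Hypothesis Hbis : bisector_condition N.

Lemma birkhoff_orth_sym_unit x y : N x = 1 -> N y = 1 ->
  birkhoff_orth N y x -> birkhoff_orth N x y.
Proof.
  intros Hx Hy Hyx t.
  replace (N x) with (N (vadd x (vscal 0 y))) by (f_equal; vec_eq).
  apply (convex_sym_min (fun s => N (vadd x (vscal s y))) (convex_norm_line N HN x y)).
  intros c Hc; simpl.
  rewrite (norm_opp_eq N HN (vadd x (vscal (- c) y)) (vadd (vscal c y) (vopp x))) by vec_eq.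
  rewrite <- (Hbis x y Hx Hy Hyx c Hc); f_equal; vec_eq.
Qed.

Lemma norm_reflect_dominant x y a b : N x = 1 -> N y = 1 -> birkhoff_orth N y x ->
  Rabs b <= Rabs a ->
  N (vadd (vscal a x) (vscal b y)) = N (vadd (vscal a x) (vscal (- b) y)).
Proof.
  intros Hx Hy Hyx Hab.
  destruct (Req_dec a 0) as [-> | Ha]; [apply (norm_opp_eq N HN); vec_eq |].
  assert (Hc := Rabs_div_le_1 a (- b) Ha ltac:(rewrite Rabs_Ropp; assumption)).
  replace (vadd (vscal a x) (vscal b y))
    with (vscal (- a) (vadd (vscal (- b / a) y) (vopp x))) by (vec_eq; field; assumption).
  replace (vadd (vscal a x) (vscal (- b) y))
    with (vscal a (vadd (vscal (- b / a) y) x)) by (vec_eq; field; assumption).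
  rewrite !(norm_scal N HN), Rabs_Ropp, (Hbis x y Hx Hy Hyx _ Hc); reflexivity.
Qed.

Lemma norm_reflect x y a b : N x = 1 -> N y = 1 -> birkhoff_orth N y x ->
  N (vadd (vscal a x) (vscal b y)) = N (vadd (vscal a x) (vscal (- b) y)).
Proof.
  intros Hx Hy Hyx.
  destruct (Rle_dec (Rabs b) (Rabs a)) as [Hab | Hab]; [apply norm_reflect_dominant; assumption |].
  assert (E := norm_reflect_dominant y x b a Hy Hx
                 (birkhoff_orth_sym_unit x y Hx Hy Hyx) ltac:(lra)).
  replace (vadd (vscal a x) (vscal b y)) with (vadd (vscal b y) (vscal a x)) by vec_eq.
  rewrite E; apply (norm_opp_eq N HN); vec_eq.
Qed.

Lemma norm_flat_extend m d eps : N m = 1 -> N d = 1 -> birkhoff_orth N m d -> 0 < eps ->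
  (forall s, - eps <= s <= eps -> N (vadd m (vscal s d)) = 1) ->
  forall s, - (1 + eps) <= s <= 1 + eps -> N (vadd m (vscal s d)) = 1.
Proof.
  intros Hm Hd Hmd Heps Hflat.
  set (g := fun s => N (vadd m (vscal s d))).
  assert (Hg : convex g) by apply (convex_norm_line N HN).
  assert (Hge : forall s, 1 <= g s) by (intros s; rewrite <- Hm; apply Hmd).
  assert (Hsym : forall s, g (- s) = g s).
  { intros s; unfold g.
    transitivity (N (vadd (vscal s d) (vscal (- (1)) m))); [apply (norm_opp_eq N HN); vec_eq |].
    rewrite <- (norm_reflect d m s 1 Hd Hm Hmd); f_equal; vec_eq. }
  set (y := vadd m (vscal eps d)).
  assert (Hy : N y = 1) by (apply Hflat; lra).
  assert (Hyd : birkhoff_orth N y d).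
  { intros t; rewrite Hy; unfold y.
    replace (vadd (vadd m (vscal eps d)) (vscal t d)) with (vadd m (vscal (eps + t) d))
      by vec_eq.
    apply Hge. }
  assert (E := Hbis d y Hd Hy Hyd 1 ltac:(lra)).
  replace (vadd (vscal 1 y) d) with (vadd m (vscal (1 + eps) d)) in E by (unfold y; vec_eq).
  replace (vadd (vscal 1 y) (vopp d)) with (vadd m (vscal (- (1 - eps)) d)) in E
    by (unfold y; vec_eq).
  fold (g (1 + eps)) (g (- (1 - eps))) in E; rewrite Hsym in E.
  assert (G : g (1 - eps) = 1).
  { destruct (Rle_dec (1 - eps) eps) as [h | h]; [apply Hflat; lra |].
    assert (T := convex_chord g eps (1 - eps) (1 + eps) Hg ltac:(lra)).
    assert (Geps : g eps = 1) by (apply Hflat; lra).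
    rewrite Geps, <- E in T.
    assert (h1 := Hge (1 - eps)); nra. }
  intros s Hs; apply Rle_antisym; [| apply Hge].
  apply (convex_le_ends g (- (1 + eps)) (1 + eps) s 1 Hg Hs); [rewrite Hsym |]; lra.
Qed.

(* Along the line through the midpoint [m] the norm is convex, even, and
   equal to 1 on [-e, e]; two flat extensions make it 1 at [2 + e], where
   the triangle inequality forces it to be at least [1 + e]. *)
Lemma unit_ball_strictly_convex p q : N p = 1 -> N q = 1 ->
  N (vscal (1 / 2) (vadd p q)) = 1 -> p = q.
Proof.
  intros Hp Hq Hpq.
  set (m := vscal (1 / 2) (vadd p q)) in *.
  set (d := vscal (1 / 2) (vadd q (vopp p))).
  destruct (classic (d = vzero)) as [Hd | Hd].
  { unfold d, vzero, vscal, vadd, vopp in Hd; simpl in Hd; injection Hd as E1 E2.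
    apply V_ext; lra. }
  set (e := N d).
  assert (He : 0 < e) by (apply (norm_gt0 N HN); assumption).
  set (u := vscal (/ e) d).
  assert (Hu : N u = 1) by (apply (norm_normalize N HN); assumption).
  set (g := fun s => N (vadd m (vscal s u))).
  assert (Hg : convex g) by apply (convex_norm_line N HN).
  assert (G0 : g 0 = 1) by (unfold g; rewrite <- Hpq; f_equal; vec_eq).
  assert (Ge : g e = 1)
    by (unfold g; rewrite <- Hq; f_equal; unfold u, m, d; vec_eq; field; lra).
  assert (Gme : g (- e) = 1)
    by (unfold g; rewrite <- Hp; f_equal; unfold u, m, d; vec_eq; field; lra).
  assert (Hge : forall s, 1 <= g s).
  { intros s; rewrite <- G0; apply (convex_ge_three g (- e) 0 e Hg); lra. }
  assert (Hmu : birkhoff_orth N m u) by (intros t; rewrite Hpq; apply Hge).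
  assert (F0 : forall s, - e <= s <= e -> g s = 1).
  { intros s Hs; apply Rle_antisym; [| apply Hge].
    apply (convex_le_ends g (- e) e s 1 Hg Hs); lra. }
  assert (F2 := norm_flat_extend m u (1 + e) Hpq Hu Hmu ltac:(lra)
                  (norm_flat_extend m u e Hpq Hu Hmu He F0)).
  assert (G := F2 (2 + e) ltac:(lra)).
  assert (T := norm_sub_le N HN (vscal (2 + e) u) m).
  replace (vadd (vscal (2 + e) u) m) with (vadd m (vscal (2 + e) u)) in T by vec_eq.
  rewrite (norm_scal N HN), Hu, Hpq, G, Rabs_pos_eq in T; lra.
Qed.

Lemma norm_even_line_abs p d a1 a2 : d <> vzero ->
  (forall r, N (vadd p (vscal (- r) d)) = N (vadd p (vscal r d))) ->
  N (vadd p (vscal a1 d)) = 1 -> N (vadd p (vscal a2 d)) = 1 -> Rabs a1 = Rabs a2.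
Proof.
  intros Hd Hsym H1 H2.
  set (h := fun r => N (vadd p (vscal r d))).
  assert (Hh : convex h) by apply (convex_norm_line N HN).
  assert (Habs : forall r, h (Rabs r) = h r).
  { intros r; unfold Rabs; destruct (Rcase_abs r); [apply Hsym | reflexivity]. }
  assert (Hlt : forall b1 b2, 0 <= b1 < b2 -> h b1 = 1 -> h b2 = 1 -> False).
  { intros b1 b2 Hb G1 G2.
    set (c := (b1 + b2) / 2).
    assert (Gc : h c = 1).
    { apply Rle_antisym; [apply (convex_le_ends h b1 b2 c 1 Hh); unfold c; lra |].
      assert (T := convex_chord h (- b2) b1 c Hh ltac:(unfold c; lra)).
      assert (G2' : h (- b2) = 1) by (unfold h; rewrite Hsym; exact G2).
      rewrite G1, G2' in T; unfold c in *; nra. }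
    assert (E := unit_ball_strictly_convex (vadd p (vscal b1 d)) (vadd p (vscal b2 d)) G1 G2
                   ltac:(rewrite <- Gc at 2; unfold h, c; f_equal; vec_eq; field)).
    assert (Z : vscal (b1 - b2) d = vzero).
    { replace (vscal (b1 - b2) d)
        with (vadd (vadd p (vscal b1 d)) (vopp (vadd p (vscal b2 d)))) by vec_eq.
      rewrite E; vec_eq. }
    apply scal_eq_vzero in Z; [lra | assumption]. }
  assert (G1 : h (Rabs a1) = 1) by (rewrite Habs; exact H1).
  assert (G2 : h (Rabs a2) = 1) by (rewrite Habs; exact H2).
  destruct (Rtotal_order (Rabs a1) (Rabs a2)) as [l | [E | l]]; [exfalso | exact E | exfalso].
  - exact (Hlt _ _ (conj (Rabs_pos a1) l) G1 G2).
  - exact (Hlt _ _ (conj (Rabs_pos a2) l) G2 G1).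
Qed.

(* With [x] the direction of [u + v] and [y] Birkhoff orthogonal to it,
   [u] and [v] are mirror images of each other in the reflection [norm_reflect]. *)
Lemma unit_pair_reflected u v : N u = 1 -> N v = 1 -> vadd u v <> vzero ->
  exists x y a b, N x = 1 /\ N y = 1 /\ birkhoff_orth N y x /\
    u = vadd (vscal a x) (vscal b y) /\ v = vadd (vscal a x) (vscal (- b) y).
Proof.
  intros Hu Hv Huv.
  set (r := N (vadd u v)).
  assert (Hr : 0 < r) by (apply (norm_gt0 N HN); assumption).
  set (x := vscal (/ r) (vadd u v)).
  assert (Hx : N x = 1) by (apply (norm_normalize N HN); assumption).
  assert (Exr : vadd u v = vscal r x) by (unfold x; vec_eq; field; lra).
  clearbody x.
  assert (Hx0 := norm_eq1_neq0 N HN x Hx).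
  destruct (birkhoff_orth_exists N HN x Hx0) as [y [Hy Hyx]].
  assert (D := birkhoff_orth_det N HN x y Hx0 (norm_eq1_neq0 N HN y Hy) Hyx).
  set (a := det u y / det x y); set (b := det x u / det x y).
  assert (Eu : u = vadd (vscal a x) (vscal b y)) by apply (det_decomp x y u D).
  clearbody a b.
  assert (Ev : v = vadd (vscal (r - a) x) (vscal (- b) y)).
  { replace v with (vadd (vscal r x) (vopp u)) by (rewrite <- Exr; vec_eq).
    rewrite Eu; vec_eq. }
  assert (Hsym : forall c,
    N (vadd (vscal (- b) y) (vscal (- c) x)) = N (vadd (vscal (- b) y) (vscal c x))).
  { intros c.
    rewrite (norm_opp_eq N HN _ (vadd (vscal c x) (vscal b y))) by vec_eq.
    rewrite (norm_reflect x y c b Hx Hy Hyx); f_equal; vec_eq. }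
  assert (Ha : Rabs a = Rabs (r - a)).
  { apply (norm_even_line_abs (vscal (- b) y) x a (r - a) Hx0 Hsym).
    - rewrite <- Hu, Eu, (norm_reflect x y a b Hx Hy Hyx); f_equal; vec_eq.
    - rewrite <- Hv, Ev; f_equal; vec_eq. }
  assert (Er : r - a = a)
    by (revert Ha; unfold Rabs; destruct (Rcase_abs a), (Rcase_abs (r - a)); lra).
  exists x, y, a, b; rewrite <- Er at 2; auto.
Qed.

Lemma norm_swap_unit u v s t : N u = 1 -> N v = 1 ->
  N (vadd (vscal s u) (vscal t v)) = N (vadd (vscal t u) (vscal s v)).
Proof.
  intros Hu Hv.
  destruct (classic (vadd u v = vzero)) as [Huv | Huv].
  { assert (Ev : v = vopp u)
      by (revert Huv; unfold vadd, vzero; intros [= E1 E2]; vec_eq; lra).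
    subst v.
    replace (vadd (vscal s u) (vscal t (vopp u))) with (vscal (s - t) u) by vec_eq.
    replace (vadd (vscal t u) (vscal s (vopp u))) with (vscal (t - s) u) by vec_eq.
    rewrite !(norm_scal N HN), Rabs_minus_sym; reflexivity. }
  destruct (unit_pair_reflected u v Hu Hv Huv) as (x & y & a & b & Hx & Hy & Hyx & -> & ->).
  replace (vadd (vscal s (vadd (vscal a x) (vscal b y)))
                (vscal t (vadd (vscal a x) (vscal (- b) y))))
    with (vadd (vscal (a * (s + t)) x) (vscal (b * (s - t)) y)) by vec_eq.
  replace (vadd (vscal t (vadd (vscal a x) (vscal b y)))
                (vscal s (vadd (vscal a x) (vscal (- b) y))))
    with (vadd (vscal (a * (s + t)) x) (vscal (- (b * (s - t))) y)) by vec_eq.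
  apply norm_reflect; assumption.
Qed.

Section Frame.

Variables e1 e2 : V.
Hypothesis He1 : N e1 = 1.
Hypothesis He2 : N e2 = 1.
Hypothesis He21 : birkhoff_orth N e2 e1.

(* Swapping the unit vectors [e1] and [v = a e1 + b e2] in [N (e1 - a v)]
   produces a second point of the unit circle on the line [a e1 + R e2]. *)
Lemma frame_unit_coords a b : N (vadd (vscal a e1) (vscal b e2)) = 1 -> a * a + b * b = 1.
Proof.
  intros Hab.
  assert (Ha : Rabs a <= 1).
  { rewrite <- Hab, <- (Rmult_1_r (Rabs a)), <- He1, <- (norm_scal N HN).
    exact (birkhoff_orth_scal N HN a e1 e2 (birkhoff_orth_sym_unit e1 e2 He1 He2 He21) b). }
  assert (Ha2 : a * a <= 1) by (revert Ha; unfold Rabs; destruct (Rcase_abs a); nra).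
  destruct (Req_dec b 0) as [-> | Hb].
  { replace (vadd (vscal a e1) (vscal 0 e2)) with (vscal a e1) in Hab by vec_eq.
    rewrite (norm_scal N HN), He1 in Hab.
    revert Hab; unfold Rabs; destruct (Rcase_abs a); nra. }
  set (v := vadd (vscal a e1) (vscal b e2)) in Hab.
  assert (S := norm_swap_unit e1 v 1 (- a) He1 Hab).
  assert (Hc : N (vadd (vscal a e1) (vscal ((1 - a * a) / b) e2)) = 1).
  { rewrite (norm_swap_unit e1 e2 a _ He1 He2), (norm_reflect e1 e2 _ a He1 He2 He21).
    replace (vadd (vscal ((1 - a * a) / b) e1) (vscal (- a) e2))
      with (vscal (/ b) (vadd (vscal 1 e1) (vscal (- a) v)))
      by (unfold v; vec_eq; field; assumption).
    rewrite (norm_scal N HN), S.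
    replace (vadd (vscal (- a) e1) (vscal 1 v)) with (vscal b e2) by (unfold v; vec_eq).
    rewrite (norm_scal N HN), He2, Rabs_inv, Rmult_1_r.
    apply Rinv_l, Rabs_no_R0; assumption. }
  assert (E := norm_even_line_abs (vscal a e1) e2 b ((1 - a * a) / b)
                 (norm_eq1_neq0 N HN e2 He2)
                 (fun r => eq_sym (norm_reflect e1 e2 a r He1 He2 He21)) Hab Hc).
  assert (E' : Rabs ((1 - a * a) / b) * Rabs b = 1 - a * a).
  { rewrite <- Rabs_mult, Rabs_pos_eq; [field; assumption |].
    replace ((1 - a * a) / b * b) with (1 - a * a) by (field; assumption); lra. }
  assert (Eb : Rabs b * Rabs b = b * b)
    by (rewrite <- Rabs_mult; apply Rabs_pos_eq; nra).
  rewrite <- E in E'; lra.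
Qed.

Lemma frame_norm a b : N (vadd (vscal a e1) (vscal b e2)) = sqrt (a * a + b * b).
Proof.
  set (w := vadd (vscal a e1) (vscal b e2)).
  destruct (classic (w = vzero)) as [Hw | Hw].
  { assert (D := birkhoff_orth_det N HN e1 e2 (norm_eq1_neq0 N HN e1 He1)
                   (norm_eq1_neq0 N HN e2 He2) He21).
    destruct (det_indep e1 e2 a b D Hw) as [-> ->].
    rewrite Hw, (norm_vzero N HN), Rmult_0_l, Rplus_0_l, sqrt_0; reflexivity. }
  set (r := N w).
  assert (Hr : 0 < r) by (apply (norm_gt0 N HN); assumption).
  assert (Hn : N (vscal (/ r) w) = 1) by (apply (norm_normalize N HN); assumption).
  assert (E := frame_unit_coords (a / r) (b / r)
                 ltac:(rewrite <- Hn; f_equal; unfold w; vec_eq; field; lra)).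
  replace (a * a + b * b) with (r * r * ((a / r) * (a / r) + (b / r) * (b / r)))
    by (field; lra).
  rewrite E, Rmult_1_r, sqrt_square; lra.
Qed.

End Frame.

Lemma bisector_condition_inner_product : norm_from_inner_product N.
Proof.
  assert (H10 : ((1, 0) : V) <> vzero) by (intros [= E]; lra).
  set (e1 := vscal (/ N (1, 0)) (1, 0)).
  assert (He1 : N e1 = 1) by (apply (norm_normalize N HN); assumption).
  assert (He1' := norm_eq1_neq0 N HN e1 He1).
  destruct (birkhoff_orth_exists N HN e1 He1') as [e2 [He2 He21]].
  apply (norm_from_inner_product_of_frame N e1 e2
           (birkhoff_orth_det N HN e1 e2 He1' (norm_eq1_neq0 N HN e2 He2) He21)).
  apply frame_norm; assumption.
Qed.

End BisectorCondition.

Section InnerProduct.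

Variable B : V -> V -> R.
Hypothesis HB : is_inner_product B.

Lemma ip_add_r u v w : B u (vadd v w) = B u v + B u w.
Proof. rewrite (ip_sym B HB), (ip_add_l B HB), !(ip_sym B HB _ u); reflexivity. Qed.

Lemma ip_scal_r t u v : B u (vscal t v) = t * B u v.
Proof. rewrite (ip_sym B HB), (ip_scal_l B HB), (ip_sym B HB v); reflexivity. Qed.

Lemma ip_expand a b u w :
  B (vadd (vscal a u) (vscal b w)) (vadd (vscal a u) (vscal b w)) =
  a * a * B u u + 2 * a * b * B u w + b * b * B w w.
Proof.
  rewrite !(ip_add_l B HB), !ip_add_r, !(ip_scal_l B HB), !ip_scal_r, (ip_sym B HB w u).
  ring.
Qed.

Lemma ip_self_ge0 v : 0 <= B v v.
Proof.
  destruct (classic (v = vzero)) as [-> | Hv]; [| left; apply (ip_pos B HB); assumption].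
  replace vzero with (vscal 0 vzero) by vec_eq; rewrite (ip_scal_l B HB); lra.
Qed.

Variable N : V -> R.
Hypothesis HNB : forall v, N v = sqrt (B v v).

Lemma ip_birkhoff_orth x y : birkhoff_orth N y x -> B x y = 0.
Proof.
  intros Hyx.
  destruct (classic (x = vzero)) as [-> | Hx].
  { replace vzero with (vscal 0 vzero) by vec_eq; rewrite (ip_scal_l B HB); ring. }
  assert (Hxx := ip_pos B HB x Hx).
  set (t := - B x y / B x x).
  assert (Ht := Hyx t).
  rewrite !HNB in Ht; apply sqrt_le_0 in Ht; [| apply ip_self_ge0 ..].
  replace (vadd y (vscal t x)) with (vadd (vscal 1 y) (vscal t x)) in Ht by vec_eq.
  rewrite ip_expand, (ip_sym B HB y x) in Ht.
  assert (E : B x y * B x y = - (B x x * (2 * t * B x y + t * t * B x x)))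
    by (unfold t; field; lra).
  nra.
Qed.

Lemma ip_norm_reflect x y c : B x y = 0 ->
  N (vadd (vscal c y) x) = N (vadd (vscal c y) (vopp x)).
Proof.
  intros Hxy; rewrite !HNB; f_equal.
  replace (vadd (vscal c y) x) with (vadd (vscal c y) (vscal 1 x)) by vec_eq.
  unfold vopp; rewrite !ip_expand, (ip_sym B HB y x), Hxy; ring.
Qed.

End InnerProduct.

Theorem proposition3p2 (N : V -> R) (HN : is_norm N) :
  norm_from_inner_product N <->
  (forall x y : V,
     unit_circle N x -> unit_circle N y -> birkhoff_orth N y x ->
     forall z : V, in_segment (vopp y) y z -> bisector N (vopp x) x z).
Proof.
  split.
  - intros [B [HB HNB]] x y _ _ Hyx z [s [_ ->]]; unfold bisector.
    replace (vadd (vadd (vscal (1 - s) (vopp y)) (vscal s y)) (vopp (vopp x)))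
      with (vadd (vscal (2 * s - 1) y) x) by vec_eq.
    replace (vadd (vadd (vscal (1 - s) (vopp y)) (vscal s y)) (vopp x))
      with (vadd (vscal (2 * s - 1) y) (vopp x)) by vec_eq.
    exact (ip_norm_reflect B HB N HNB x y _ (ip_birkhoff_orth B HB N HNB x y Hyx)).
  - intros Hseg; apply (bisector_condition_inner_product N HN).
    intros x y Hx Hy Hyx c Hc.
    assert (Hz : in_segment (vopp y) y (vscal c y))
      by (exists ((c + 1) / 2); split; [lra | vec_eq; field]).
    assert (E := Hseg x y Hx Hy Hyx (vscal c y) Hz); unfold bisector in E.
    replace (vopp (vopp x)) with x in E by vec_eq.
    exact E.
Qed.
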